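(* Let $p_n:\mathrm{Br}_n\to\widehat{\mathrm S}_n$ be the homomorphism defined on generators by $\sigma_{i,i+1}\mapsto((i\ i{+}1),1)$. Then there is a short exact sequence $1\to\widehat{\mathrm{PBr}}_n\to\mathrm{Br}_n\xrightarrow{p_n}\widehat{\mathrm S}_n\to1$, i.e. $p_n$ is surjective with kernel $\widehat{\mathrm{PBr}}_n$.
   Context: $n\ge2$. $\widehat{\mathrm S}_n=\{(\sigma,d)\in\mathrm S_n\times\mathbb Z: d\text{ odd}\iff\operatorname{sgn}\sigma=-1\}$. $\mathrm{Br}_n$ is the braid group with Artin generators $\sigma_{i,i+1}$; $\mathrm{PBr}_n=\pi_1(\mathrm{Conf}_n(\mathbb C))$ the pure braid group. With $q_n:\mathrm{Conf}_n(\mathbb C)\to\mathbb C^*$, $q_n(x)=\prod_{i<j}(x_i-x_j)$, the Milnor fiber is $F_n=q_n^{-1}(1)$, and $\widehat{\mathrm{PBr}}_n:=\pi_1(F_n)$, identified with the kernel of $\pi_1(q_n):\mathrm{PBr}_n\to\mathbb Z$ (which sends each standard generator $a_{i,j}$ to $1$). *)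

(* Braid group Br_n presented by Artin generators, as words
   modulo the congruence generated by the braid relations. *)
From mathcomp Require Import all_boot all_order all_algebra all_fingroup.
Set Implicit Arguments. Unset Strict Implicit. Unset Printing Implicit Defensive.
Import GRing.Theory.

(* A letter (k, true) is the Artin generator sigma_{k+1,k+2} (0-based k),
   (k, false) its inverse.  Valid letters for Br_n: k.+1 < n. *)
Definition gen := (nat * bool)%type.
Definition ginv (g : gen) : gen := (g.1, ~~ g.2).
Definition valid_word (n : nat) (w : seq gen) : bool :=
  all (fun g : gen => g.1.+1 < n) w.

Inductive braid_eq (n : nat) : seq gen -> seq gen -> Prop :=
| be_refl w : braid_eq n w w
| be_sym u v : braid_eq n u v -> braid_eq n v u
| be_trans u v w : braid_eq n u v -> braid_eq n v w -> braid_eq n u w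
| be_free u v (g : gen) : g.1.+1 < n ->
    braid_eq n (u ++ g :: ginv g :: v) (u ++ v)
| be_comm u v i j : i.+1 < j -> j.+1 < n ->
    braid_eq n (u ++ (i, true) :: (j, true) :: v) (u ++ (j, true) :: (i, true) :: v)
| be_braid u v i : i.+2 < n ->
    braid_eq n (u ++ [:: (i, true); (i.+1, true); (i, true)] ++ v)
               (u ++ [:: (i.+1, true); (i, true); (i.+1, true)] ++ v).

(* transposition (k k+1) in S_n (identity if out of range) *)
Definition adj_tperm (n k : nat) : 'S_n :=
  match insub k, insub k.+1 with
  | Some a, Some b => tperm a b
  | _, _ => 1%g
  end.

Definition perm_of (n : nat) (w : seq gen) : 'S_n :=
  foldr (fun g s => (adj_tperm n g.1 * s)%g) 1%g w.

Definition esum (w : seq gen) : int :=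
  foldr (fun g z => ((if g.2 then 1 else -1) + z)%R) 0%R w.

Definition in_hatS (n : nat) (x : 'S_n * int) : bool :=
  odd `|x.2|%N == odd_perm x.1.

Definition p_word (n : nat) (w : seq gen) : 'S_n * int := (perm_of n w, esum w).

Definition pure (n : nat) (w : seq gen) : Prop := perm_of n w = 1%g.

(* standard generator a_{i,j} (0-based strands i < j):
   sigma_{j-1} ... sigma_{i+1} sigma_i^2 sigma_{i+1}^{-1} ... sigma_{j-1}^{-1}
   (1-based Artin indices) *)
Definition a_word (i j : nat) : seq gen :=
  [seq (k, true) | k <- rev (iota i.+1 (j - i.+1))] ++
  [:: (i, true); (i, true)] ++
  [seq (k, false) | k <- iota i.+1 (j - i.+1)].

(* phi is a homomorphism PBr_n -> Z sending every a_{i,j} to 1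
   (this is pi_1(q_n)) *)
Definition is_qn_map (n : nat) (phi : seq gen -> int) : Prop :=
  [/\ (forall u v, valid_word n u -> valid_word n v -> pure n u -> pure n v ->
         braid_eq n u v -> phi u = phi v),
      (forall u v, valid_word n u -> valid_word n v -> pure n u -> pure n v ->
         phi (u ++ v) = (phi u + phi v)%R)
    & (forall i j, i < j -> j < n -> phi (a_word i j) = 1%R)].

(* Both components of p_n respect the braid relations: adjacent transpositions
   satisfy the Coxeter relations and every relation is homogeneous; moreover each
   letter changes both the sign of the permutation and the parity of the exponent
   sum, which gives the image in \hat S_n. Adjacent transpositions generate S_n
   and sigma_1^2 shifts the degree by 2 without moving the strands, so p_n is onto.

   For the kernel let phi : PBr_n -> Z send every a_ij to 1. Then
   psi := phi - (exponent sum)/2 is a homomorphism on PBr_n killing every a_ij,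
   and it suffices to show that psi kills PBr_n. Since Z is abelian, for q pure
   psi (g q g^-1) only depends on the permutation of g, and for a suitable sign
   sigma_k^(+-1) a_{i,m} sigma_k^(-+1) = a_{j,m}; hence psi kills the conjugates
   of the a_{i,m} by Br_m. Using the words sigma_m ... sigma_{j+1} as coset
   representatives of Br_m in Br_{m+1} (Reidemeister-Schreier), every braid on
   m+1 strands is a product of such conjugates, a braid on m strands and a coset
   representative; for a pure braid the representative is trivial, and induction
   on m concludes. *)

From mathcomp Require Import all_boot all_order all_algebra all_fingroup.
From mathcomp Require Import zify.
(* Imported after MathComp, so that [perm_of] is the map on words and not the
   MathComp type constructor of the same name. *)
From Stdlib Require Import Setoid Morphisms.
Set Implicit Arguments. Unset Strict Implicit. Unset Printing Implicit Defensive.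
Import GRing.Theory.

Lemma braid_eq_equiv n : Equivalence (braid_eq n).
Proof. by split; [exact: be_refl | exact: be_sym | exact: be_trans]. Qed.
Existing Instance braid_eq_equiv.
#[local] Hint Resolve be_refl : core.

Lemma braid_eq_ctx n x y u v :
  braid_eq n u v -> braid_eq n (x ++ u ++ y) (x ++ v ++ y).
Proof.
elim=> {u v} [w | u v _ | u v w _ H1 _ H2 | u v g Hg | u v i j Hij Hj | u v i Hi].
- reflexivity.
- exact: be_sym.
- exact: be_trans H2.
- by have := be_free (x ++ u) (v ++ y) Hg; rewrite -!catA.
- by have := be_comm (x ++ u) (v ++ y) Hij Hj; rewrite -!catA.
- by have := be_braid (x ++ u) (v ++ y) Hi; rewrite -!catA.
Qed.

Instance cat_braid_eq n :
  Proper (braid_eq n ==> braid_eq n ==> braid_eq n) (@cat gen).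
Proof.
move=> u u' Hu v v' Hv; transitivity (u' ++ v).
- exact: (braid_eq_ctx [::] v Hu).
- by have := braid_eq_ctx u' [::] Hv; rewrite !cats0.
Qed.

Instance cons_braid_eq n g : Proper (braid_eq n ==> braid_eq n) (cons g).
Proof. by move=> u v H; have := braid_eq_ctx [:: g] [::] H; rewrite !cats0. Qed.

Definition winv (w : seq gen) : seq gen := rev (map ginv w).

Lemma ginvK : involutive ginv.
Proof. by case=> i b; rewrite /ginv negbK. Qed.

Lemma winv_cat u v : winv (u ++ v) = winv v ++ winv u.
Proof. by rewrite /winv map_cat rev_cat. Qed.

Lemma winv_cons g w : winv (g :: w) = winv w ++ [:: ginv g].
Proof. by rewrite /winv /= rev_cons cats1. Qed.

Lemma winvK : involutive winv.
Proof. by move=> w; rewrite /winv map_rev revK -map_comp (eq_map ginvK) map_id. Qed.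

Lemma valid_word_cat n u v :
  valid_word n (u ++ v) = valid_word n u && valid_word n v.
Proof. exact: all_cat. Qed.

Lemma valid_word_winv n w : valid_word n (winv w) = valid_word n w.
Proof. by rewrite /valid_word /winv all_rev all_map. Qed.

Lemma valid_word_conj n g q :
  valid_word n (g ++ q ++ winv g) = valid_word n g && valid_word n q.
Proof. by rewrite !valid_word_cat valid_word_winv; case: (valid_word n g); rewrite ?andbT. Qed.

Lemma valid_word_mono m n w : m <= n -> valid_word m w -> valid_word n w.
Proof. by move=> Hmn /allP Hw; apply/allP => g /Hw; lia. Qed.

Definition far (i j : nat) := (i.+1 < j) || (j.+1 < i).

Section BraidCalculus.
Variable n : nat.

Lemma braid_eq_cancel g r : g.1.+1 < n -> braid_eq n (g :: ginv g :: r) r.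
Proof. by move=> Hg; have := be_free [::] r Hg. Qed.

Lemma braid_eq_cancelV g r : g.1.+1 < n -> braid_eq n (ginv g :: g :: r) r.
Proof. by move=> Hg; have := @braid_eq_cancel (ginv g) r Hg; rewrite ginvK. Qed.

Lemma braid_eq_winvr w r : valid_word n w -> braid_eq n (w ++ winv w ++ r) r.
Proof.
elim: w r => [|g w IH] r /=; first reflexivity.
case/andP=> Hg Hw; rewrite winv_cons -catA (IH _ Hw).
exact: braid_eq_cancel.
Qed.

Lemma braid_eq_winvl w r : valid_word n w -> braid_eq n (winv w ++ w ++ r) r.
Proof.
by move=> Hw; have := @braid_eq_winvr (winv w) r; rewrite winvK valid_word_winv; apply.
Qed.

Lemma braid_eq_far g h r : far g.1 h.1 -> g.1.+1 < n -> h.1.+1 < n ->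
  braid_eq n (g :: h :: r) (h :: g :: r).
Proof.
move: g h => [i b] [j c] /= Hf Hi Hj.
pose commutes g h := forall r, braid_eq n (g :: h :: r) (h :: g :: r).
have commuteC g h : commutes g h -> commutes h g by move=> H s; symmetry.
have commuteV g h : g.1.+1 < n -> commutes g h -> commutes (ginv g) h.
  move=> Hg H s; transitivity (ginv g :: h :: g :: ginv g :: s).
    by rewrite (braid_eq_cancel s Hg).
  by rewrite -(H (ginv g :: s)); apply: braid_eq_cancelV.
have Hpp : commutes (i, true) (j, true).
  case/orP: Hf => Hf s; first by have := be_comm [::] s Hf Hj.
  by symmetry; have := be_comm [::] s Hf Hi.
have Hbp : commutes (i, b) (j, true) by case: b; last exact: commuteV Hpp.
case: c; first exact: Hbp.
exact: commuteC _ _ (commuteV (j, true) _ Hj (commuteC _ _ Hbp)) r.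
Qed.

Lemma braid_eq_far_word g w r : g.1.+1 < n -> valid_word n w ->
  all (fun h => far g.1 h.1) w -> braid_eq n (g :: w ++ r) (w ++ g :: r).
Proof.
move=> Hg; elim: w => [|h w IH] //= /andP[Hh Hw] /andP[Hf Hfw].
by rewrite braid_eq_far // IH.
Qed.

Lemma braid_eq_braid i r : i.+2 < n ->
  braid_eq n ((i, true) :: (i.+1, true) :: (i, true) :: r)
             ((i.+1, true) :: (i, true) :: (i.+1, true) :: r).
Proof. by move=> Hi; have := be_braid [::] r Hi. Qed.

Lemma braid_eq_conjV x w y : valid_word n x -> valid_word n y ->
  braid_eq n (x ++ w) (w ++ y) -> braid_eq n (winv x ++ w) (w ++ winv y).
Proof.
move=> Hx Hy H; transitivity (winv x ++ (w ++ y) ++ winv y ++ [::]).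
  by rewrite -catA (braid_eq_winvr [::] Hy) cats0.
by rewrite -H -catA (braid_eq_winvl _ Hx) cats0.
Qed.

Lemma braid_eq_conjVr x w y : valid_word n w ->
  braid_eq n (x ++ w) (w ++ y) -> braid_eq n (y ++ winv w) (winv w ++ x).
Proof.
move=> Hw H; transitivity (winv w ++ (w ++ y) ++ winv w).
  by rewrite -catA (braid_eq_winvl _ Hw).
by rewrite -H -!catA -[w ++ winv w]cats0 -catA (braid_eq_winvr [::] Hw) cats0.
Qed.

End BraidCalculus.

Definition adj_swap (k y : nat) : nat :=
  if y == k then k.+1 else if y == k.+1 then k else y.

Lemma adj_swapC i j y : i.+1 < j -> adj_swap j (adj_swap i y) = adj_swap i (adj_swap j y).
Proof. by rewrite /adj_swap => ?; repeat case: eqP; lia. Qed.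

Lemma adj_swap_braid i y :
  adj_swap i (adj_swap i.+1 (adj_swap i y)) = adj_swap i.+1 (adj_swap i (adj_swap i.+1 y)).
Proof. by rewrite /adj_swap; repeat case: eqP; lia. Qed.

Section PermOfWords.
Variable n : nat.

Lemma adj_tpermE k (x : 'I_n) : k.+1 < n -> adj_tperm n k x = adj_swap k x :> nat.
Proof.
move=> Hk; rewrite /adj_tperm.
case: insubP => [a _ Ea | /negP]; last lia.
case: insubP => [b _ Eb | /negP]; last lia.
rewrite permE /= /adj_swap -(inj_eq val_inj) Ea -(inj_eq val_inj) Eb.
by case: ifP => // _; case: ifP.
Qed.

Lemma odd_adj_tperm k : k.+1 < n -> odd_perm (adj_tperm n k).
Proof.
move=> Hk; rewrite /adj_tperm.
case: insubP => [a _ Ea | /negP]; last lia.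
case: insubP => [b _ Eb | /negP]; last lia.
by rewrite odd_tperm -(inj_eq val_inj) Ea Eb; lia.
Qed.

Lemma adj_tpermK k : (adj_tperm n k * adj_tperm n k = 1)%g.
Proof.
rewrite /adj_tperm; case: insub => [a|]; last by rewrite mulg1.
by case: insub => [b|]; rewrite ?mulg1 // -{1}(tpermV a b) mulVg.
Qed.

Lemma adj_tpermV k : ((adj_tperm n k)^-1 = adj_tperm n k)%g.
Proof. by apply: (mulgI (adj_tperm n k)); rewrite mulgV adj_tpermK. Qed.

Lemma perm_of_cat u v : perm_of n (u ++ v) = (perm_of n u * perm_of n v)%g.
Proof. by elim: u => [|g u IH] /=; rewrite ?mul1g // IH mulgA. Qed.

Lemma perm_of_winv w : perm_of n (winv w) = (perm_of n w)^-1%g.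
Proof.
elim: w => [|g w IH]; first by rewrite invg1.
by rewrite winv_cons perm_of_cat IH /= mulg1 invMg adj_tpermV.
Qed.

Lemma braid_eq_perm_of u v : braid_eq n u v -> perm_of n u = perm_of n v.
Proof.
have eq_perm (s t : 'S_n) : (forall x, s x = t x :> nat) -> s = t.
  by move=> H; apply/permP => x; exact: ord_inj.
elim=> {u v} [w | u v _ -> | u v w _ -> _ -> | u v g _ | u v i j Hij Hj | u v i Hi] //.
- by rewrite !perm_of_cat /= [X in (_ * X)%g]mulgA adj_tpermK mul1g.
- rewrite !perm_of_cat /=; congr (_ * _)%g; rewrite !mulgA; congr (_ * _)%g.
  by apply: eq_perm => x; rewrite !permM !adj_tpermE 1?adj_swapC //; lia.
- rewrite !perm_of_cat /= !mulg1; congr (_ * _)%g; rewrite !mulgA; congr (_ * _)%g.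
  by apply: eq_perm => x; rewrite !permM !adj_tpermE 1?adj_swap_braid //; lia.
Qed.

End PermOfWords.

Lemma esum_cat u v : esum (u ++ v) = (esum u + esum v)%R.
Proof. by elim: u => [|g u IH] /=; rewrite ?add0r // IH addrA. Qed.

Lemma esum_winv w : esum (winv w) = (- esum w)%R.
Proof.
elim: w => [|g w IH]; first by rewrite oppr0.
by rewrite winv_cons esum_cat IH /= opprD addr0; case: g.2; rewrite /= addrC.
Qed.

Lemma braid_eq_esum n u v : braid_eq n u v -> esum u = esum v.
Proof.
elim=> {u v} [w | u v _ -> | u v w _ -> _ -> | u v [k []] _ | u v i j _ _ | u v i _] //;
  by rewrite !esum_cat /= ?addKr ?addNKr.
Qed.

Lemma odd_esum n w : valid_word n w -> odd `|esum w|%N = odd_perm (perm_of n w).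
Proof.
elim: w => [|[k b] w IH] /=; first by rewrite odd_perm1.
case/andP=> Hk Hw; rewrite odd_permM odd_adj_tperm // -IH //.
by case: b; lia.
Qed.

Section PermOfSurjective.
Variable n : nat.

Lemma perm_of_adj (x y : 'I_n) : y = x.+1 :> nat -> perm_of n [:: (x : nat, true)] = tperm x y.
Proof.
move=> Hy; rewrite /= mulg1; apply/permP => z; apply: ord_inj.
rewrite adj_tpermE -?Hy // /adj_swap.
case: tpermP => [-> | -> | zx zy]; rewrite ?eqxx //.
  by rewrite Hy; case: eqP => [|_]; [lia | rewrite eqxx].
case: eqP => [/val_inj // | _]; case: eqP => // Hz.
by case: zy; apply: val_inj; rewrite /= Hy.
Qed.

Lemma perm_of_tperm (x y : 'I_n) : exists2 w, valid_word n w & perm_of n w = tperm x y.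
Proof.
wlog lt_xy : x y / x < y.
  move=> Hwlog; case: (ltngtP x y) => [|/Hwlog|/ord_inj->]; first exact: Hwlog.
    by rewrite tpermC.
  by exists [::]; rewrite ?tperm1.
move Hd: (y - x.+1) => d; elim: d y lt_xy Hd => [|d IH] y lt_xy Hd.
  exists [:: (x : nat, true)]; last by apply: perm_of_adj; lia.
  by rewrite /valid_word /= andbT; have := ltn_ord y; lia.
have Hy' : y.-1 < n by have := ltn_ord y; lia.
pose y' := Ordinal Hy'.
have [w Vw Pw] : exists2 w, valid_word n w & perm_of n w = tperm x y'.
  by apply: IH => /=; lia.
have Hy'y : y = y'.+1 :> nat by rewrite /=; lia.
exists ([:: (y' : nat, true)] ++ w ++ [:: (y' : nat, true)]).
  by rewrite !valid_word_cat Vw /valid_word /= !andbT -Hy'y ltn_ord.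
rewrite !perm_of_cat Pw (perm_of_adj Hy'y) -{1}tpermV -/(conjg _ _) tpermJ.
by rewrite tpermL tpermD // -(inj_eq (@ord_inj n)) /=; lia.
Qed.

Lemma perm_of_surj (s : 'S_n) : exists2 w, valid_word n w & perm_of n w = s.
Proof.
have [ts -> _] := prod_tpermP s; elim: ts => [|[x y] ts [w Vw Pw]].
  by exists [::]; rewrite ?big_nil.
have [t Vt Pt] := perm_of_tperm x y.
by exists (t ++ w); rewrite ?valid_word_cat ?Vt ?perm_of_cat ?Pt ?Pw ?big_cons.
Qed.

Lemma perm_of_nseq_double m g : perm_of n (nseq m.*2 g) = 1%g.
Proof. by elim: m => //= m ->; rewrite mulg1 adj_tpermK. Qed.

End PermOfSurjective.

Lemma esum_nseq m k (b : bool) : esum (nseq m (k, b)) = (if b then m%:Z else - m%:Z)%R.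
Proof. by elim: m => [|m /= ->]; case: b => /=; lia. Qed.

Section PWord.
Variable n : nat.

Lemma braid_eq_p_word u v : braid_eq n u v -> p_word n u = p_word n v.
Proof. by move=> H; rewrite /p_word (braid_eq_perm_of H) (braid_eq_esum H). Qed.

Lemma p_word_cat u v :
  p_word n (u ++ v) = (((p_word n u).1 * (p_word n v).1)%g, ((p_word n u).2 + (p_word n v).2)%R).
Proof. by rewrite /p_word perm_of_cat esum_cat. Qed.

Lemma p_word_in_hatS w : valid_word n w -> in_hatS (p_word n w).
Proof. by move=> Vw; rewrite /in_hatS (odd_esum Vw). Qed.

Lemma p_word_surj (x : 'S_n * int) : 1 < n -> in_hatS x ->
  exists w, valid_word n w /\ p_word n w = x.
Proof.
case: x => s d n_gt1; rewrite /in_hatS /= => /eqP odd_d.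
have [w0 Vw0 Pw0] := perm_of_surj s.
set e := (d - esum w0)%R.
have [m Hm] : exists m, `|e|%N = m.*2.
  by exists `|e|%N./2; have := odd_esum Vw0; rewrite Pw0 -odd_d; lia.
exists (w0 ++ nseq m.*2 (0, (0 <= e)%R)); split.
  by rewrite valid_word_cat Vw0; apply/allP => g /nseqP[-> _].
rewrite /p_word perm_of_cat perm_of_nseq_double mulg1 Pw0 esum_cat esum_nseq.
by congr pair; case: ifP; lia.
Qed.

End PWord.

(* [ladder m j] is sigma_m ... sigma_{j+1} in 1-based Artin indices; it moves
   strand m to j, and for j <= m these words represent the cosets Br_m \ Br_{m+1}. *)
Definition ladder (m j : nat) : seq gen := [seq (k, true) | k <- rev (iota j (m - j))].

Definition within (j m : nat) (w : seq gen) : bool := all (fun g : gen => j <= g.1 < m) w.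

Lemma ladder_rec m j : j < m -> ladder m j = ladder m j.+1 ++ [:: (j, true)].
Proof.
move=> lt_jm; rewrite /ladder (_ : m - j = (m - j.+1).+1); last by lia.
by rewrite /= rev_cons map_rcons cats1.
Qed.

Lemma ladderxx m : ladder m m = [::].
Proof. by rewrite /ladder subnn. Qed.

Lemma within_ladder m j : within j m (ladder m j).
Proof. by rewrite /within all_map all_rev; apply/allP => k; rewrite mem_iota /=; lia. Qed.

Lemma within_winv j m w : within j m (winv w) = within j m w.
Proof. by rewrite /within /winv all_rev all_map. Qed.

Lemma within_cat j m u v : within j m (u ++ v) = within j m u && within j m v.
Proof. exact: all_cat. Qed.

Lemma within_weaken i j m w : i <= j -> within j m w -> within i m w.
Proof. by move=> le_ij /allP Hw; apply/allP => g /Hw; lia. Qed.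

Lemma within_valid n j m w : m < n -> within j m w -> valid_word n w.
Proof. by move=> lt_mn /allP Hw; apply/allP => g /Hw; lia. Qed.

Lemma within_far k j m w : k.+1 < j -> within j m w -> all (fun g : gen => far k g.1) w.
Proof. by move=> Hk /allP Hw; apply/allP => g /Hw; rewrite /far; lia. Qed.

Lemma a_wordE i m :
  a_word i m = ladder m i.+1 ++ [:: (i, true); (i, true)] ++ winv (ladder m i.+1).
Proof. by rewrite /a_word /ladder /winv -map_comp -map_rev revK. Qed.

Lemma within_a_word i m : i < m -> within i m (a_word i m).
Proof.
move=> lt_im; rewrite a_wordE !within_cat within_winv /= leqnn lt_im /=.
by rewrite andbb (within_weaken _ (within_ladder m i.+1)).
Qed.

Section Ladders.
Variables n m : nat.
Hypothesis lt_mn : m < n.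

Lemma valid_ladder j : valid_word n (ladder m j).
Proof. exact: within_valid lt_mn (within_ladder m j). Qed.

Lemma valid_a_word i : i < m -> valid_word n (a_word i m).
Proof. by move=> lt_im; apply: within_valid lt_mn (within_a_word lt_im). Qed.

Lemma ladder_shift j k r : j <= k -> k.+1 < m ->
  braid_eq n ((k, true) :: ladder m j ++ r) (ladder m j ++ (k.+1, true) :: r).
Proof.
move=> le_jk lt_km; move Hd: (k - j) => d; elim: d j le_jk Hd r => [|d IH] j le_jk Hd r.
  have -> : j = k by lia.
  rewrite (ladder_rec (_ : k < m)); last by lia.
  rewrite (ladder_rec lt_km) -!catA /= braid_eq_far_word //=; first by rewrite braid_eq_braid //; lia.
  - by lia.
  - exact: valid_ladder.
  - by apply: within_far (within_ladder m k.+2); lia.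
rewrite (ladder_rec (_ : j < m)); last by lia.
rewrite -!catA /= IH; try lia.
by rewrite braid_eq_far //= /far; lia.
Qed.

Lemma ladder_shiftV j k b r : j <= k -> k.+1 < m ->
  braid_eq n (ladder m j ++ (k.+1, b) :: r) ((k, b) :: ladder m j ++ r).
Proof.
move=> le_jk lt_km; case: b; first by symmetry; apply: ladder_shift.
have E : braid_eq n ([:: (k, false)] ++ ladder m j) (ladder m j ++ [:: (k.+1, false)]).
  apply: (@braid_eq_conjV _ [:: (k, true)] _ [:: (k.+1, true)]).
  - by rewrite /valid_word /=; lia.
  - by rewrite /valid_word /=; lia.
  - by have := ladder_shift [::] le_jk lt_km; rewrite cats0.
by rewrite -[_ :: ladder m j ++ r]/(([:: (k, false)] ++ ladder m j) ++ r) E -catA.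
Qed.

Lemma winv_ladder_shift j k r : j <= k -> k.+1 < m ->
  braid_eq n ((k.+1, true) :: winv (ladder m j) ++ r) (winv (ladder m j) ++ (k, true) :: r).
Proof.
move=> le_jk lt_km.
have E : braid_eq n ([:: (k.+1, true)] ++ winv (ladder m j)) (winv (ladder m j) ++ [:: (k, true)]).
  apply: braid_eq_conjVr; first exact: valid_ladder.
  by have := ladder_shift [::] le_jk lt_km; rewrite cats0.
by rewrite -[_ :: winv _ ++ r]/(([:: (k.+1, true)] ++ winv (ladder m j)) ++ r) E -catA.
Qed.

Lemma conj_a_word_far i k r : i < m -> k.+1 < i ->
  braid_eq n ((k, true) :: a_word i m ++ (k, false) :: r) (a_word i m ++ r).
Proof.
move=> lt_im lt_ki; rewrite braid_eq_far_word /=; first by rewrite braid_eq_cancel //=; lia.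
- by lia.
- exact: valid_a_word.
- exact: within_far lt_ki (within_a_word lt_im).
Qed.

Lemma conj_a_word_gt i k r : i < k -> k.+1 < m ->
  braid_eq n ((k, true) :: a_word i m ++ (k, false) :: r) (a_word i m ++ r).
Proof.
move=> lt_ik lt_km; rewrite a_wordE -!catA /= ladder_shift //.
rewrite (@braid_eq_far _ (k.+1, true)) /=; try by rewrite /far; lia.
rewrite (@braid_eq_far _ (k.+1, true)) /=; try by rewrite /far; lia.
by rewrite winv_ladder_shift // braid_eq_cancel //=; lia.
Qed.

Lemma conj_a_word_eq i r : i.+1 < m ->
  braid_eq n ((i, true) :: a_word i m ++ (i, false) :: r) (a_word i.+1 m ++ r).
Proof.
move=> lt_im; rewrite !a_wordE (ladder_rec lt_im) winv_cat -!catA /=.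
rewrite braid_eq_far_word /=; first last.
- by apply: within_far (within_ladder m i.+2); lia.
- exact: valid_ladder.
- by lia.
rewrite !braid_eq_braid; try lia.
rewrite braid_eq_cancel /=; last by lia.
rewrite braid_eq_far_word /=; first by rewrite braid_eq_cancel //=; lia.
- by lia.
- by rewrite valid_word_winv valid_ladder.
- by apply: (@within_far _ i.+2 m); [lia | rewrite within_winv within_ladder].
Qed.

Lemma conj_a_word_pred i r : 0 < i -> i < m ->
  braid_eq n ((i.-1, false) :: a_word i m ++ (i.-1, true) :: r) (a_word i.-1 m ++ r).
Proof.
move=> i_gt0 lt_im; have := @conj_a_word_eq i.-1 ((i.-1, true) :: r).
rewrite prednK // => <-; last by lia.
by rewrite !(@braid_eq_cancelV n (i.-1, true)) //=; lia.
Qed.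

Lemma conj_a_word i k r : i < m -> k.+1 < m -> exists c j,
  j < m /\ braid_eq n ((k, c) :: a_word i m ++ (k, ~~ c) :: r) (a_word j m ++ r).
Proof.
move=> lt_im lt_km.
case: (ltngtP k.+1 i) => [lt_ki | lt_ik | Hi].
- by exists true, i; split; last exact: conj_a_word_far.
- case: (ltngtP k i) => [| lt_ik' | Eki]; first by lia.
    by exists true, i; split; last exact: conj_a_word_gt.
  by subst k; exists true, i.+1; split; last exact: conj_a_word_eq.
- exists false, i.-1; split; first by lia.
  by rewrite -Hi; apply: (@conj_a_word_pred k.+1); lia.
Qed.

Lemma ladder_rcons_pos j : j < m ->
  braid_eq n (ladder m j ++ [:: (j, true)]) (a_word j m ++ ladder m j.+1).
Proof.
move=> lt_jm; rewrite a_wordE (ladder_rec lt_jm) -!catA /=.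
by rewrite -[winv _ ++ ladder m j.+1]cats0 -catA braid_eq_winvl ?valid_ladder.
Qed.

Lemma ladder_rcons_neg j : j < m -> braid_eq n (ladder m j ++ [:: (j, false)]) (ladder m j.+1).
Proof.
move=> lt_jm; rewrite (ladder_rec lt_jm) -catA /=.
by rewrite (@braid_eq_cancel n (j, true)) ?cats0 //=; lia.
Qed.

Lemma ladderS_rcons_neg k : k < m ->
  braid_eq n (ladder m k.+1 ++ [:: (k, false)]) (winv (a_word k m) ++ ladder m k).
Proof.
move=> lt_km; rewrite a_wordE !winv_cat winvK (ladder_rec lt_km) -!catA /=.
rewrite braid_eq_winvl ?valid_ladder //=.
by rewrite (@braid_eq_cancelV n (k, true)) //=; lia.
Qed.

Definition a_gen (c : seq gen) : Prop :=
  c = [::] \/ exists2 i, i < m & c = a_word i m \/ c = winv (a_word i m).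

Lemma ladder_rcons j k s : j <= m -> k < m -> exists c b j', [/\ a_gen c, valid_word m b,
  j' <= m & braid_eq n (ladder m j ++ [:: (k, s)]) (c ++ b ++ ladder m j')].
Proof.
move=> le_jm lt_km.
have valid1 i b : i.+1 < m -> valid_word m [:: (i, b)] by rewrite /valid_word /= => ->.
case: (ltnP k.+1 j) => [lt_kj | le_jk].
  exists [::], [:: (k, s)], j; split=> //; [by left | by apply: valid1; lia |].
  symmetry; rewrite -[ladder m j]cats0 /= braid_eq_far_word ?cats0 //=; try lia.
  - exact: valid_ladder.
  - exact: within_far lt_kj (within_ladder m j).
case: (ltngtP j k) => [lt_jk | lt_kj | Ejk].
- have Ek : k = k.-1.+1 by lia.
  exists [::], [:: (k.-1, s)], j; split=> //; [by left | by apply: valid1; lia |].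
  by rewrite {1}Ek ladder_shiftV ?cats0 //; lia.
- have -> : j = k.+1 by lia.
  case: s; first by exists [::], [::], k; split; [left | | lia | rewrite -ladder_rec].
  exists (winv (a_word k m)), [::], k; split; [| by [] | lia | exact: ladderS_rcons_neg].
  by right; exists k; last right.
- subst k; case: s; last by exists [::], [::], j.+1; split; [left | | | exact: ladder_rcons_neg].
  exists (a_word j m), [::], j.+1; split; [| by [] | by [] | exact: ladder_rcons_pos].
  by right; exists j; last left.
Qed.

End Ladders.

Lemma perm_of_fix n m b (x : 'I_n) : valid_word m b -> x = m :> nat -> perm_of n b x = m :> nat.
Proof.
elim: b x => [|g b IH] x /=; first by rewrite perm1.
case/andP=> lt_gm Vb Hx; rewrite permM IH // adj_tpermE; last by have := ltn_ord x; lia.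
by rewrite /adj_swap Hx; case: eqP; [lia | case: eqP; lia].
Qed.

Lemma perm_of_ladder n m j (x : 'I_n) : j <= m -> x = m :> nat -> perm_of n (ladder m j) x = j :> nat.
Proof.
move=> le_jm Hx; move Hd: (m - j) => d; elim: d j le_jm Hd => [|d IH] j le_jm Hd.
  have -> : j = m by lia. by rewrite ladderxx /= perm1.
have lt_jm : j < m by lia.
rewrite (ladder_rec lt_jm) perm_of_cat permM /= mulg1 adj_tpermE; last by have := ltn_ord x; lia.
by rewrite IH //; try lia; rewrite /adj_swap eqxx; case: eqP; lia.
Qed.

Section Pure.
Variable n : nat.

Lemma pure_cat u v : pure n u -> pure n v -> pure n (u ++ v).
Proof. by rewrite /pure perm_of_cat => -> ->; rewrite mulg1. Qed.

Lemma pure_winv u : pure n u -> pure n (winv u).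
Proof. by rewrite /pure perm_of_winv => ->; rewrite invg1. Qed.

Lemma pure_conj g q : pure n q -> pure n (g ++ q ++ winv g).
Proof. by rewrite /pure !perm_of_cat perm_of_winv => ->; rewrite mul1g mulgV. Qed.

Lemma pure_a_word i j : pure n (a_word i j).
Proof. by rewrite a_wordE; apply: pure_conj; rewrite /pure /= mulg1 adj_tpermK. Qed.

Lemma braid_eq_pure u v : braid_eq n u v -> pure n u -> pure n v.
Proof. by rewrite /pure => /braid_eq_perm_of ->. Qed.

End Pure.

Section PureKernel.
Variables (n : nat) (psi : seq gen -> int).
Hypothesis psi_braid : forall u v, valid_word n u -> valid_word n v -> pure n u -> pure n v ->
  braid_eq n u v -> psi u = psi v.
Hypothesis psiD : forall u v, valid_word n u -> valid_word n v -> pure n u -> pure n v ->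
  psi (u ++ v) = (psi u + psi v)%R.
Hypothesis psi_a : forall i j, i < j -> j < n -> psi (a_word i j) = 0%R.

Definition in_ker (w : seq gen) : Prop := [/\ valid_word n w, pure n w & psi w = 0%R].

Lemma psi_nil : psi [::] = 0%R.
Proof. by have := psiD (u := [::]) (v := [::]) isT isT erefl erefl; rewrite cat0s; lia. Qed.

Lemma psiV x : valid_word n x -> pure n x -> psi (winv x) = (- psi x)%R.
Proof.
move=> Vx Px; have Vx' : valid_word n (winv x) by rewrite valid_word_winv.
have Px' := pure_winv Px.
have Kx : psi (x ++ winv x) = 0%R.
  rewrite -psi_nil; apply: psi_braid => //; first by rewrite valid_word_cat Vx.
    exact: pure_cat.
  by have := braid_eq_winvr [::] Vx; rewrite cats0.
by have := psiD Vx Vx' Px Px'; rewrite Kx; lia.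
Qed.

Lemma psi_conj x q : valid_word n x -> pure n x -> valid_word n q -> pure n q ->
  psi (x ++ q ++ winv x) = psi q.
Proof.
move=> Vx Px Vq Pq; have Vx' : valid_word n (winv x) by rewrite valid_word_winv.
have Px' := pure_winv Px.
rewrite psiD ?valid_word_cat ?Vq //; last exact: pure_cat.
by rewrite psiD // psiV //; lia.
Qed.

Lemma in_ker_nil : in_ker [::].
Proof. by split; last exact: psi_nil. Qed.

Lemma in_ker_cat u v : in_ker u -> in_ker v -> in_ker (u ++ v).
Proof.
move=> [Vu Pu Ku] [Vv Pv Kv].
by split; [rewrite valid_word_cat Vu | exact: pure_cat | rewrite psiD // Ku Kv addr0].
Qed.

Lemma in_kerV u : in_ker u -> in_ker (winv u).
Proof.
move=> [Vu Pu Ku].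
by split; [rewrite valid_word_winv | exact: pure_winv | rewrite psiV // Ku oppr0].
Qed.

Lemma in_ker_braid u v : in_ker u -> braid_eq n u v -> valid_word n v -> in_ker v.
Proof.
move=> [Vu Pu Ku] E Vv; have Pv := braid_eq_pure E Pu.
by split=> //; rewrite -(psi_braid Vu Vv Pu Pv E).
Qed.

Lemma in_ker_conj_perm g1 g2 q : valid_word n g1 -> valid_word n g2 -> valid_word n q ->
  perm_of n g1 = perm_of n g2 -> in_ker (g1 ++ q ++ winv g1) -> in_ker (g2 ++ q ++ winv g2).
Proof.
move=> V1 V2 Vq E [Vc Pc Kc]; set x := g2 ++ winv g1.
have Vx : valid_word n x by rewrite valid_word_cat V2 valid_word_winv.
have Px : pure n x by rewrite /pure perm_of_cat perm_of_winv E mulgV.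
apply: (@in_ker_braid (x ++ (g1 ++ q ++ winv g1) ++ winv x)); first split.
- by rewrite valid_word_conj Vx Vc.
- exact: (@pure_conj n x _ Pc).
- by rewrite psi_conj.
- by rewrite /x winv_cat winvK -!catA !braid_eq_winvl.
- by rewrite valid_word_conj V2 Vq.
Qed.

Lemma in_ker_conj_a m b i : m < n -> valid_word m b -> i < m -> in_ker (b ++ a_word i m ++ winv b).
Proof.
move=> lt_mn; elim/last_ind: b i => [|b [k s] IH] i.
  by move=> _ lt_im; rewrite cats0; split; [exact: valid_a_word | exact: pure_a_word | exact: psi_a].
rewrite -cats1 valid_word_cat => /andP[Vb /andP[/= lt_km _]] lt_im.
have Vb' := valid_word_mono (ltnW lt_mn) Vb.
have [c [j [lt_jm E]]] := conj_a_word lt_mn (winv b) lt_im lt_km.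
have V1 k' c' : valid_word n (b ++ [:: (k', c')]) = (k'.+1 < n).
  by rewrite valid_word_cat Vb' /valid_word /= andbT.
(* [(k, s)] and [(k, c)] have the same permutation, so the sign is ours to choose. *)
apply: (@in_ker_conj_perm (b ++ [:: (k, c)])); rewrite ?V1 ?valid_a_word //; try lia.
  by rewrite !perm_of_cat.
apply: in_ker_braid (IH j Vb lt_jm) _ _.
  by rewrite winv_cat -[(b ++ _) ++ _]catA /= E.
by rewrite valid_word_conj V1 valid_a_word // andbT; lia.
Qed.

Lemma in_ker_conj_a_gen m b c : m < n -> valid_word m b -> a_gen m c ->
  in_ker (b ++ c ++ winv b).
Proof.
move=> lt_mn Vb; have Vb' := valid_word_mono (ltnW lt_mn) Vb.
case=> [-> | [i lt_im [-> | ->]]].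
- apply: in_ker_braid in_ker_nil _ _; last by rewrite valid_word_conj Vb'.
  by symmetry; have := braid_eq_winvr [::] Vb'; rewrite cats0.
- exact: in_ker_conj_a.
- have -> : b ++ winv (a_word i m) ++ winv b = winv (b ++ a_word i m ++ winv b).
    by rewrite !winv_cat winvK catA.
  exact/in_kerV/in_ker_conj_a.
Qed.

Lemma ladder_decomp m w : m < n -> valid_word m.+1 w -> exists P b j,
  [/\ in_ker P, valid_word m b, j <= m & braid_eq n w (P ++ b ++ ladder m j)].
Proof.
move=> lt_mn; elim/last_ind: w => [_ | w [k s] IH].
  by exists [::], [::], m; rewrite ladderxx; split=> //; exact: in_ker_nil.
rewrite -cats1 valid_word_cat => /andP[Vw /andP[lt_km _]].
have [P [b [j [KP Vb le_jm E]]]] := IH Vw.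
have [c [b' [j' [Hc Vb' le_j'm E']]]] := ladder_rcons lt_mn s le_jm lt_km.
exists (P ++ b ++ c ++ winv b), (b ++ b'), j'; split=> //.
- exact: in_ker_cat KP (in_ker_conj_a_gen lt_mn Vb Hc).
- by rewrite valid_word_cat Vb.
rewrite E -!catA E' braid_eq_winvl //.
exact: valid_word_mono (ltnW lt_mn) Vb.
Qed.

Lemma psi_pure_eq0 w : valid_word n w -> pure n w -> psi w = 0%R.
Proof.
suff psi_pure_le m : m <= n -> valid_word m w -> pure n w -> psi w = 0%R by exact: psi_pure_le.
elim: m w => [|m IH] w; first by case: w => [_ _ _ | g w _ /andP[]] //; rewrite psi_nil.
move=> lt_mn Vw Pw; have [P [b [j [[VP PP KP] Vb le_jm E]]]] := ladder_decomp lt_mn Vw.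
have Vb' := valid_word_mono (ltnW lt_mn) Vb.
have Pbl : pure n (b ++ ladder m j).
  by move: (braid_eq_pure E Pw); rewrite /pure !perm_of_cat PP mul1g.
(* [b] fixes strand m, which the ladder then moves to j. *)
have Ejm : j = m.
  have := congr1 (fun s : 'S_n => s (Ordinal lt_mn) : nat) Pbl.
  by rewrite perm_of_cat permM perm1 (perm_of_ladder le_jm (perm_of_fix Vb _)).
move: E Pbl; rewrite Ejm ladderxx cats0 => E Pb.
have Vw' : valid_word n w := valid_word_mono lt_mn Vw.
rewrite (psi_braid Vw' _ Pw (pure_cat PP Pb) E); last by rewrite valid_word_cat VP.
by rewrite psiD // KP (IH _ (ltnW lt_mn)) ?add0r.
Qed.

End PureKernel.

Lemma esum_a_word i j : esum (a_word i j) = 2%R.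
Proof. by rewrite a_wordE !esum_cat esum_winv /=; lia. Qed.

Section QnMaps.
Variable n : nat.

Lemma even_esum_pure w : valid_word n w -> pure n w -> ~~ odd `|esum w|%N.
Proof. by move=> Vw Pw; rewrite (odd_esum Vw) Pw odd_perm1. Qed.

Lemma is_qn_map_half_esum : is_qn_map n (fun w => divz (esum w) 2).
Proof.
split=> [u v _ _ _ _ /braid_eq_esum -> // | u v Vu Vv Pu Pv | i j _ _].
  by have := even_esum_pure Vu Pu; have := even_esum_pure Vv Pv; rewrite esum_cat; lia.
by rewrite esum_a_word.
Qed.

Lemma qn_map_pure phi w : is_qn_map n phi -> valid_word n w -> pure n w ->
  phi w = divz (esum w) 2.
Proof.
case=> phi_braid phiD phi_a Vw Pw.
suff: (phi w - divz (esum w) 2 = 0)%R by lia.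
apply: (@psi_pure_eq0 n (fun w => phi w - divz (esum w) 2)%R) => //.
- by move=> u v Vu Vv Pu Pv E; rewrite (phi_braid u v) // (braid_eq_esum E).
- move=> u v Vu Vv Pu Pv; rewrite phiD // esum_cat.
  by have := even_esum_pure Vu Pu; have := even_esum_pure Vv Pv; lia.
- by move=> i j lt_ij lt_jn; rewrite phi_a // esum_a_word.
Qed.

Lemma ker_p_word phi w : is_qn_map n phi -> valid_word n w ->
  p_word n w = (1%g, 0%R) <-> pure n w /\ phi w = 0%R.
Proof.
move=> qn_phi Vw; rewrite /p_word; split=> [[Pw Ew] | [Pw Kw]].
  by split=> //; rewrite (qn_map_pure qn_phi) // Ew.
congr pair => //; have := qn_map_pure qn_phi Vw Pw; have := even_esum_pure Vw Pw; lia.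
Qed.

End QnMaps.

Theorem mainTheorem15 (n : nat) (hn : 2 <= n) :
  (* p_n is a well-defined homomorphism Br_n -> \hat S_n *)
  ((forall u v, valid_word n u -> braid_eq n u v -> p_word n u = p_word n v) /\
   (forall u v, p_word n (u ++ v) =
      (((p_word n u).1 * (p_word n v).1)%g, ((p_word n u).2 + (p_word n v).2)%R)) /\
   (forall w, valid_word n w -> in_hatS (p_word n w))) /\
  (* surjectivity *)
  (forall x : 'S_n * int, in_hatS x ->
     exists w, valid_word n w /\ p_word n w = x) /\
  (* a map pi_1(q_n) : PBr_n -> Z exists, and ker p_n = its kernel in PBr_n *)
  (exists phi, is_qn_map n phi) /\
  (forall phi, is_qn_map n phi ->
     forall w, valid_word n w ->
       (p_word n w = (1%g, 0%R) <-> pure n w /\ phi w = 0%R)).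
Proof.
split; first split.
- by move=> u v _; apply: braid_eq_p_word.
- by split; [exact: p_word_cat | exact: p_word_in_hatS].
split; first by move=> x; apply: p_word_surj.
split; first by exists (fun w => divz (esum w) 2); apply: is_qn_map_half_esum.
by move=> phi qn_phi w; apply: ker_p_word.
Qed.
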